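(* Let $\mathcal V_1,\mathcal V_2,\mathcal V_3\in \mathsf F$, $b_i\in B(\mathcal V_i)$, $i=1,2,3$. Then (i) for any $\Lambda\in \mathsf F(\mathcal V_1,\mathcal V_2)$, $\delta_{\mathsf F}(\Lambda(b_1)\|b_3)\ge \delta_{\mathsf F}(b_1\|b_3)$; (ii) for any $\Theta\in \mathsf F(\mathcal V_2,\mathcal V_3)$, $\delta_{\mathsf F}(b_1\|\Theta(b_2))\le \delta_{\mathsf F}(b_1\|b_2)$.
   Context: Let $\mathsf{BS}$ be the category whose objects are finite dimensional real vector spaces $\mathcal V$ endowed with a fixed proper (closed, convex, pointed, generating) cone $\mathcal V^+\subset\mathcal V$ and a base section $B(\mathcal V)$, i.e. a convex subset $B(\mathcal V)\subset\mathcal V^+$ which is a base of the cone $\mathcal V^+\cap\mathrm{span}(B(\mathcal V))$ and satisfies $B(\mathcal V)\cap\mathrm{int}(\mathcal V^+)\neq\emptyset$. Morphisms $\Lambda:\mathcal V\to\mathcal W$ in $\mathsf{BS}$ are linear maps with $\Lambda(\mathcal V^+)\subseteq\mathcal W^+$ and $\Lambda(B(\mathcal V))\subseteq B(\mathcal W)$. The dual object $\mathcal V^*$ carries the dual cone $\mathcal V^{*+}=\{\varphi\in\mathcal V^*:\ \langle\varphi,c\rangle\ge0\ \forall c\in\mathcal V^+\}$ and the dual base section $B(\mathcal V^* )=\{\varphi\in\mathcal V^{*+}:\ \langle\varphi,b\rangle=1\ \forall b\in B(\mathcal V)\}$. With $[-B(\mathcal V^* ),B(\mathcal V^* )]=\{x\in\mathcal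 V^*:\ \exists b\in B(\mathcal V^* ),\ -b\le x\le b\}$, the norm on $\mathcal V$ is $\|x\|_{\mathcal V}=\max_{\psi\in[-B(\mathcal V^* ),B(\mathcal V^* )]}\langle\psi,x\rangle$. Let $\mathsf F$ be a subcategory of $\mathsf{BS}$ such that for any objects $\mathcal V,\mathcal W\in\mathsf F$ the set $\mathsf F(\mathcal V,\mathcal W)$ of morphisms $\mathcal V\to\mathcal W$ in $\mathsf F$ is convex. For objects $\mathcal V,\mathcal W\in\mathsf F$ and $b\in B(\mathcal V)$, $b'\in B(\mathcal W)$, define $\delta_{\mathsf F}(b\|b')=\inf_{\Lambda\in\mathsf F(\mathcal V,\mathcal W)}\|\Lambda(b)-b'\|_{\mathcal W}$. *)

From HB Require Import structures.
From mathcomp Require Import all_boot all_order all_algebra.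
From mathcomp Require Import all_classical all_reals all_analysis.
Set Implicit Arguments. Unset Strict Implicit. Unset Printing Implicit Defensive.
Import Order.TTheory GRing.Theory Num.Theory.
Import numFieldNormedType.Exports.
Local Open Scope classical_set_scope.
Local Open Scope ring_scope.

(* A finite-dimensional real vector space is modelled as 'rV[R]_n;
   its dual is again 'rV[R]_n with the canonical pairing. Linear maps
   V -> W are matrices acting on the right: x |-> x *m A. *)

Definition pairing (R : realType) (n : nat) (phi x : 'rV[R]_n) : R :=
  \sum_(i < n) phi ord0 i * x ord0 i.

Definition is_cone (R : realType) (n : nat) (C : set 'rV[R]_n) : Prop :=
  C 0 /\ (forall x y, C x -> C y -> C (x + y)) /\
  (forall (t : R) x, 0 <= t -> C x -> C (t *: x)).

Definition proper_cone (R : realType) (n : nat) (C : set 'rV[R]_n) : Prop :=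
  [/\ is_cone C, closed C,
      (forall x, C x -> C (- x) -> x = 0) &
      (forall v, exists x y, C x /\ C y /\ v = x - y)].

Definition convex_set (R : realType) (n : nat) (A : set 'rV[R]_n) : Prop :=
  forall x y (t : R), A x -> A y -> 0 <= t <= 1 -> A ((1 - t) *: x + t *: y).

Definition span_set (R : realType) (n : nat) (A : set 'rV[R]_n) : set 'rV[R]_n :=
  [set x | exists (k : nat) (c : 'I_k -> R) (v : 'I_k -> 'rV[R]_n),
      (forall i, A (v i)) /\ x = \sum_(i < k) c i *: v i].

Definition is_base_of (R : realType) (n : nat) (B K : set 'rV[R]_n) : Prop :=
  B `<=` K /\
  forall x, K x -> x != 0 ->
    exists t b, [/\ 0 < t, B b, x = t *: b &
      forall t' b', 0 < t' -> B b' -> x = t' *: b' -> t' = t /\ b' = b].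

Definition base_section (R : realType) (n : nat) (C B : set 'rV[R]_n) : Prop :=
  [/\ convex_set B, B `<=` C, is_base_of B (C `&` span_set B) &
      exists b, B b /\ (interior C) b].

Record BSobj (R : realType) := mkBSobj {
  bs_dim : nat;
  bs_cone : set 'rV[R]_bs_dim;
  bs_base : set 'rV[R]_bs_dim;
  bs_cone_proper : proper_cone bs_cone;
  bs_base_section : base_section bs_cone bs_base }.
Arguments bs_dim {R} _.
Arguments bs_cone {R} _ _.
Arguments bs_base {R} _ _.

Definition BShom (R : realType) (V W : BSobj R)
    (A : 'M[R]_(bs_dim V, bs_dim W)) : Prop :=
  (forall x, bs_cone V x -> bs_cone W (x *m A)) /\
  (forall b, bs_base V b -> bs_base W (b *m A)).

Definition dual_cone (R : realType) (V : BSobj R) : set 'rV[R]_(bs_dim V) :=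
  [set phi | forall c, bs_cone V c -> 0 <= pairing phi c].
Arguments dual_cone {R} V _.

Definition dual_base (R : realType) (V : BSobj R) : set 'rV[R]_(bs_dim V) :=
  [set phi | dual_cone V phi /\ forall b, bs_base V b -> pairing phi b = 1].
Arguments dual_base {R} V _.

(* [-B(V-dual), B(V-dual)] w.r.t. the order of the dual cone *)
Definition dual_interval (R : realType) (V : BSobj R) : set 'rV[R]_(bs_dim V) :=
  [set x | exists b, dual_base V b /\ dual_cone V (x + b) /\ dual_cone V (b - x)].
Arguments dual_interval {R} V _.

Definition bs_norm (R : realType) (V : BSobj R) (x : 'rV[R]_(bs_dim V)) : \bar R :=
  ereal_sup [set (pairing psi x)%:E | psi in dual_interval V].
Arguments bs_norm {R} V _.

Unset Implicit Arguments.
Record BSsubcat (R : realType) := mkBSsubcat {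
  F_obj : BSobj R -> Prop;
  F_hom : forall V W : BSobj R, 'M[R]_(bs_dim V, bs_dim W) -> Prop;
  F_hom_BS : forall V W A, F_hom V W A -> BShom A;
  F_hom_obj : forall V W A, F_hom V W A -> F_obj V /\ F_obj W;
  F_id : forall V, F_obj V -> F_hom V V 1%:M;
  F_comp : forall U V W A B, F_hom U V A -> F_hom V W B -> F_hom U W (A *m B);
  F_convex : forall V W A B (t : R), F_hom V W A -> F_hom V W B -> 0 <= t <= 1 ->
      F_hom V W ((1 - t) *: A + t *: B) }.
Arguments F_obj {R} _ _.
Arguments F_hom {R} _ _ _ _.
Set Implicit Arguments.

(* delta_F(b || b') = inf over Lambda in F(V,W) of ||Lambda b - b'||_W
   (extended-real infimum, so that the infimum over an empty hom-set is +oo) *)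
Definition deltaF (R : realType) (F : BSsubcat R) (V W : BSobj R)
    (b : 'rV[R]_(bs_dim V)) (b' : 'rV[R]_(bs_dim W)) : \bar R :=
  ereal_inf [set bs_norm W (b *m L - b') | L in F_hom F V W].

(* For (i), every [M] in [F(V2,V3)] gives [L M] in [F(V1,V3)] with
   [b1 (L M) = (b1 L) M], so the infimum defining [delta(b1 L || b3)] runs over
   a subfamily of the one defining [delta(b1 || b3)].  For (ii), composing a
   competitor [M] for [delta(b1 || b2)] with [Theta] gives a competitor for
   [delta(b1 || Theta b2)] of value [||(b1 M - b2) Theta||], and morphisms of BS
   contract the base norm because their adjoints map the dual interval of the
   target into that of the source. *)
From mathcomp Require Import all_boot all_order all_algebra.
From mathcomp Require Import all_classical all_reals all_analysis.
Import Order.TTheory GRing.Theory Num.Theory.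
Set Implicit Arguments. Unset Strict Implicit.
Local Open Scope classical_set_scope.
Local Open Scope ring_scope.

Lemma pairingE (R : realType) n (phi x : 'rV[R]_n) :
  pairing phi x = (x *m phi^T) ord0 ord0.
Proof. by rewrite /pairing !mxE; apply: eq_bigr => i _; rewrite mxE mulrC. Qed.

Lemma pairing_mulmx (R : realType) m n (psi : 'rV[R]_n) (x : 'rV[R]_m)
    (T : 'M[R]_(m, n)) :
  pairing psi (x *m T) = pairing (psi *m T^T) x.
Proof. by rewrite !pairingE trmx_mul trmxK mulmxA. Qed.

Section AdjointOfMorphism.
Variables (R : realType) (V W : BSobj R) (T : 'M[R]_(bs_dim V, bs_dim W)).
Hypothesis homT : BShom T.

Lemma dual_cone_adjoint psi : dual_cone W psi -> dual_cone V (psi *m T^T).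
Proof. by move=> psiW c /(proj1 homT) cT; rewrite -pairing_mulmx; apply: psiW. Qed.

Lemma dual_base_adjoint psi : dual_base W psi -> dual_base V (psi *m T^T).
Proof.
move=> [psiW psi1]; split; first exact: dual_cone_adjoint.
by move=> b /(proj2 homT) bT; rewrite -pairing_mulmx; apply: psi1.
Qed.

Lemma dual_interval_adjoint psi :
  dual_interval W psi -> dual_interval V (psi *m T^T).
Proof.
move=> [b [bW [lo hi]]]; exists (b *m T^T); split; first exact: dual_base_adjoint.
by rewrite -mulmxDl -mulmxBl; split; apply: dual_cone_adjoint.
Qed.

Lemma bs_norm_mulmx_le x : (bs_norm W (x *m T) <= bs_norm V x)%E.
Proof.
apply: ge_ereal_sup => _ [psi psiW <-]; rewrite pairing_mulmx.
by apply: ereal_sup_ubound; exists (psi *m T^T); first exact: dual_interval_adjoint.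
Qed.

End AdjointOfMorphism.

Section DeltaF.
Variables (R : realType) (F : BSsubcat R).

Lemma deltaF_le_norm (V W : BSobj R) (L : 'M[R]_(bs_dim V, bs_dim W))
    (b : 'rV[R]_(bs_dim V)) (b' : 'rV[R]_(bs_dim W)) :
  F_hom F V W L -> (deltaF F b b' <= bs_norm W (b *m L - b'))%E.
Proof. by move=> homL; apply: ereal_inf_lbound; exists L. Qed.

Lemma deltaF_precomp_ge (V1 V2 V3 : BSobj R) (L : 'M[R]_(bs_dim V1, bs_dim V2))
    (b1 : 'rV[R]_(bs_dim V1)) (b3 : 'rV[R]_(bs_dim V3)) :
  F_hom F V1 V2 L -> (deltaF F b1 b3 <= deltaF F (b1 *m L) b3)%E.
Proof.
move=> homL; apply: le_ereal_inf_tmp => _ [M homM <-].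
by rewrite -mulmxA; apply: deltaF_le_norm; apply: F_comp _ _ _ _ _ _ _ homL homM.
Qed.

Lemma deltaF_postcomp_le (V1 V2 V3 : BSobj R) (T : 'M[R]_(bs_dim V2, bs_dim V3))
    (b1 : 'rV[R]_(bs_dim V1)) (b2 : 'rV[R]_(bs_dim V2)) :
  F_hom F V2 V3 T -> (deltaF F b1 (b2 *m T) <= deltaF F b1 b2)%E.
Proof.
move=> homT; apply: le_ereal_inf_tmp => _ [M homM <-].
have homMT : F_hom F V1 V3 (M *m T) := F_comp _ _ _ _ _ _ _ homM homT.
apply: le_trans (deltaF_le_norm b1 (b2 *m T) homMT) _.
by rewrite mulmxA -mulmxBl; apply/bs_norm_mulmx_le/F_hom_BS/homT.
Qed.

End DeltaF.

Theorem proposition3 (R : realType) (F : BSsubcat R) (V1 V2 V3 : BSobj R)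
  (hV1 : F_obj F V1) (hV2 : F_obj F V2) (hV3 : F_obj F V3)
  (b1 : 'rV[R]_(bs_dim V1)) (b2 : 'rV[R]_(bs_dim V2)) (b3 : 'rV[R]_(bs_dim V3))
  (hb1 : bs_base V1 b1) (hb2 : bs_base V2 b2) (hb3 : bs_base V3 b3) :
  (forall L : 'M[R]_(bs_dim V1, bs_dim V2), F_hom F V1 V2 L ->
     (deltaF F (b1 *m L) b3 >= deltaF F b1 b3)%E) /\
  (forall T : 'M[R]_(bs_dim V2, bs_dim V3), F_hom F V2 V3 T ->
     (deltaF F b1 (b2 *m T) <= deltaF F b1 b2)%E).
Proof.
split=> [L | T]; [exact: deltaF_precomp_ge | exact: deltaF_postcomp_le].
Qed.
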